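(* If $\nu$ is a pseudorandom measure on $\mathbb{F}_{q^N}$, then so is $\nu_{1/2}=(\nu+1)/2$. More generally, for any $0<\alpha<1$, $\nu_\alpha=(1-\alpha)\nu+\alpha$ is also pseudorandom.
   Context: Fix a prime power $q$, $k\ge1$, $K=q^k$. $\mathbf{G}_N$ is the set of polynomials in $\mathbb{F}_q[t]$ of degree $<N$; $\mathbb{F}_{q^N}$ is $\mathbf{G}_N$ with multiplication modulo a fixed monic irreducible $f_N$ of degree $N$. A measure is a family $\nu_N:\mathbb{F}_{q^N}\to[0,\infty)$. Linear forms condition $(m_0,n_0,k_0)$: for $m\le m_0$ affine forms $\psi_i(\mathbf f)=\sum_{j=1}^nL_{ij}f_j+b_i$ in $n\le n_0$ variables with $L_{ij}\in\{a/c: a,c\in\mathbf{G}_{k_0},c\ne0\}$ and no two coefficient vectors proportional, $\mathbb{E}(\prod_i\nu(\psi_i(\mathbf f))\mid\mathbf f\in(\mathbb{F}_{q^N})^n)=1+o(1)$ as $N\to\infty$ uniformly in the $b_i$. Correlation condition $l_0$: there is $\tau:\mathbf{G}_N\to\mathbb{R}^+$ with $\mathbb{E}(\tau^p)=O_p(1)$ for all $p>1$ uniformly in $N$ such that for $l\le l_0$, $\mathbb{E}(\nu(f+h_1)\cdots\nu(f+h_l)\mid f)\le\sum_{1\le i<j\le l}\tau(h_i-h_j)$. Pseudorandom: $(K2^{K-1},3K-4,k)$-linear forms condition and $2^{K-1}$-correlation condition. *)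

From HB Require Import structures.
From mathcomp Require Import all_boot all_order all_algebra.
From mathcomp Require Import qpoly fraction.
From mathcomp Require Import reals exp.
Set Implicit Arguments. Unset Strict Implicit. Unset Printing Implicit Defensive.
Import Order.TTheory GRing.Theory Num.Theory.
Local Open Scope ring_scope.

(* F plays the role of F_q (q = #|F|, automatically a prime power).
   f N is the fixed monic irreducible polynomial of degree N;
   GF f N = F_q[t]/(f N), whose elements are the polynomials of degree < N
   (i.e. G_N), with multiplication modulo f N. *)
Notation GF f N := {poly %/ f N} (only parsing).

Definition Ex (R : realType) (T : finType) (g : T -> R) : R :=
  (\sum_(x : T) g x) / #|T|%:R.

Definition is_measure (F : finFieldType) (f : nat -> {poly F}) (R : realType)
  (nu : forall N, GF f N -> R) : Prop :=
  forall N (x : GF f N), 0 <= nu N x.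

(* A coefficient L = a/c is given by a pair (a, c) with a, c in G_{k0}, c <> 0. *)
Definition coef_ok (F : finFieldType) (k0 : nat) (ac : {poly F} * {poly F}) : bool :=
  [&& (size ac.1 <= k0)%N, (size ac.2 <= k0)%N & ac.2 != 0].

Definition coef_frac (F : finFieldType) (ac : {poly F} * {poly F})
  : {fraction {poly F}} :=
  FracField.tofrac ac.1 / FracField.tofrac ac.2.

Definition coef_GF (F : finFieldType) (f : nat -> {poly F}) (N : nat)
  (ac : {poly F} * {poly F}) : GF f N :=
  in_qpoly (f N) ac.1 / in_qpoly (f N) ac.2.

Definition admissible (F : finFieldType) (k0 m n : nat)
  (L : 'I_m -> 'I_n -> {poly F} * {poly F}) : Prop :=
  (forall i j, coef_ok k0 (L i j)) /\
  (forall i, exists j, coef_frac (L i j) != 0) /\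
  (forall i i', i != i' ->
     ~ exists lam : {fraction {poly F}},
         forall j, coef_frac (L i j) = lam * coef_frac (L i' j)).

Definition lin_form (F : finFieldType) (f : nat -> {poly F}) (N m n : nat)
  (L : 'I_m -> 'I_n -> {poly F} * {poly F}) (b : 'I_m -> GF f N)
  (i : 'I_m) (x : {ffun 'I_n -> GF f N}) : GF f N :=
  \sum_(j < n) coef_GF f N (L i j) * x j + b i.

Definition linear_forms_condition (F : finFieldType) (f : nat -> {poly F})
  (R : realType) (m0 n0 k0 : nat) (nu : forall N, GF f N -> R) : Prop :=
  forall (m n : nat), (m <= m0)%N -> (n <= n0)%N ->
  forall L : 'I_m -> 'I_n -> {poly F} * {poly F}, admissible k0 L ->
  forall eps : R, 0 < eps -> exists N0 : nat, forall N : nat, (N0 <= N)%N ->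
  forall b : 'I_m -> GF f N,
    `| Ex (fun x : {ffun 'I_n -> GF f N} =>
             \prod_(i < m) nu N (lin_form L b i x)) - 1 | <= eps.

Definition correlation_condition (F : finFieldType) (f : nat -> {poly F})
  (R : realType) (l0 : nat) (nu : forall N, GF f N -> R) : Prop :=
  exists tau : forall N, GF f N -> R,
    (forall N (x : GF f N), 0 <= tau N x) /\
    (forall p : R, 1 < p -> exists C : R, forall N, (0 < N)%N ->
        Ex (fun x : GF f N => powR (tau N x) p) <= C) /\
    (forall N, (0 < N)%N -> forall l : nat, (2 <= l <= l0)%N ->
       forall h : 'I_l -> GF f N,
         Ex (fun x : GF f N => \prod_(i < l) nu N (x + h i))
           <= \sum_(i < l) \sum_(j < l | (i < j)%N) tau N (h i - h j)).

Definition pseudorandom (F : finFieldType) (f : nat -> {poly F}) (R : realType)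
  (k : nat) (nu : forall N, GF f N -> R) : Prop :=
  let K := (#|F| ^ k)%N in
  [/\ is_measure nu,
      linear_forms_condition (K * 2 ^ (K - 1)) (3 * K - 4) k nu
    & correlation_condition (2 ^ (K - 1)) nu].

(* Expand prod_i ((1 - alpha) nu(psi_i) + alpha) as a convex combination, indexed by the
   subsets J of the forms, of the products prod_(i in J) nu(psi_i).  A subsystem of an
   admissible system is admissible, so every such average tends to 1 and so does the
   convex combination.  For the correlation condition the subproducts over |J| >= 2 are
   bounded by the given tau, the one over |J| = 1 by a uniform bound M on E(nu), which
   the linear forms condition provides, and the empty one by 1; hence tau + 1 + M works. *)
From HB Require Import structures.
From mathcomp Require Import all_boot all_order all_algebra.
From mathcomp Require Import qpoly fraction.
From mathcomp Require Import reals exp.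
From mathcomp Require Import lra zify.
Set Implicit Arguments. Unset Strict Implicit. Unset Printing Implicit Defensive.
Import Order.TTheory GRing.Theory Num.Theory.
Local Open Scope ring_scope.

Section Expectation.
Variables (R : realType) (T : finType).

Lemma Ex_ext (g h : T -> R) : (forall x, g x = h x) -> Ex g = Ex h.
Proof. by move=> gh; rewrite /Ex; congr (_ / _); apply: eq_bigr => x _. Qed.

Lemma Ex_le (g h : T -> R) : (forall x, g x <= h x) -> Ex g <= Ex h.
Proof.
move=> gh; rewrite /Ex ler_wpM2r ?invr_ge0 ?ler0n //.
by apply: ler_sum => x _; apply: gh.
Qed.

Lemma Ex_add (g h : T -> R) : Ex (fun x => g x + h x) = Ex g + Ex h.
Proof. by rewrite /Ex big_split mulrDl. Qed.

Lemma Ex_scale (c : R) (g : T -> R) : Ex (fun x => c * g x) = c * Ex g.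
Proof. by rewrite /Ex -mulr_sumr mulrA. Qed.

Lemma Ex_sum (I : finType) (w : I -> R) (G : I -> T -> R) :
  Ex (fun x => \sum_i w i * G i x) = \sum_i w i * Ex (G i).
Proof.
rewrite /Ex exchange_big mulr_suml; apply: eq_bigr => i _.
by rewrite -mulr_sumr mulrA.
Qed.

Lemma Ex_cst (x0 : T) (c : R) : Ex (fun _ : T => c) = c.
Proof.
rewrite /Ex sumr_const -[#|xpredT|]/#|T| -[c *+ _]mulr_natr mulfK // pnatr_eq0 -lt0n.
by apply/card_gt0P; exists x0.
Qed.

End Expectation.

Lemma Ex_shift (R : realType) (V : finZmodType) (g : V -> R) (h : V) :
  Ex (fun x => g (x + h)) = Ex g.
Proof. by rewrite /Ex [in RHS](reindex_inj (addIr h)). Qed.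

Lemma Ex_ffun1 (R : realType) (V : finType) (g : V -> R) :
  Ex (fun x : {ffun 'I_1 -> V} => g (x ord0)) = Ex g.
Proof.
rewrite /Ex card_ffun card_ord expn1; congr (_ / _).
rewrite (reindex (fun y : V => [ffun=> y])) /=.
  by apply: eq_bigr => y _; rewrite ffunE.
exists (fun x : {ffun 'I_1 -> V} => x ord0) => x _; rewrite ?ffunE //.
by apply/ffunP => i; rewrite ffunE (ord1 i).
Qed.

(* [subset_weight a c J = a ^+ #|J| * c ^+ #|~: J|], kept in product form for the expansion. *)
Definition subset_weight (R : comNzRingType) (I : finType) (a c : R) (J : {set I}) : R :=
  \prod_i (if i \in J then a else c).

Lemma prod_affine_expand (R : comNzRingType) (I : finType) (a c : R) (g : I -> R) :
  \prod_i (a * g i + c) = \sum_(J : {set I}) subset_weight a c J * \prod_(i in J) g i.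
Proof.
rewrite bigA_distr; apply: eq_bigr => J _.
rewrite [X in _ * X]big_mkcond /subset_weight -big_split /=.
by apply: eq_bigr => i _; case: ifP; rewrite ?mulr1.
Qed.

Lemma sum_subset_weight (R : comNzRingType) (I : finType) (a c : R) :
  a + c = 1 -> \sum_(J : {set I}) subset_weight a c J = 1.
Proof.
move=> ac; have := prod_affine_expand (I := I) a c (fun _ => 1).
rewrite mulr1 ac big1_eq => ->.
by apply: eq_bigr => J _; rewrite big1_eq mulr1.
Qed.

Lemma subset_weight_ge0 (R : realDomainType) (I : finType) (a c : R) (J : {set I}) :
  0 <= a -> 0 <= c -> 0 <= subset_weight a c J.
Proof. by move=> a0 c0; apply: prodr_ge0 => i _; case: ifP. Qed.

Lemma ler_sum_subpred (R : numDomainType) (I : finType) (P Q : pred I) (G : I -> R) :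
  (forall i, P i -> Q i) -> (forall i, 0 <= G i) ->
  \sum_(i | P i) G i <= \sum_(i | Q i) G i.
Proof.
move=> PQ G0; rewrite [X in X <= _]big_mkcond [X in _ <= X]big_mkcond.
apply: ler_sum => i _; case: ifP => Pi; first by rewrite PQ.
by case: ifP.
Qed.

Lemma ler_sum_term (R : numDomainType) (I : finType) (P : pred I) (G : I -> R) i0 :
  (forall i, 0 <= G i) -> P i0 -> G i0 <= \sum_(i | P i) G i.
Proof.
move=> G0 Pi0; have := ler_sum_subpred (P := pred1 i0) (Q := P) _ G0.
by rewrite big_pred1_eq; apply=> i /eqP ->.
Qed.

Lemma ltn_enum_val (n : nat) (J : {set 'I_n}) (i j : 'I_#|J|) :
  (enum_val i < enum_val j)%N = (i < j)%N.
Proof.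
set s := map val (enum J).
have s_sorted : sorted ltn s.
  rewrite /s -[enum _](eq_filter (mem_enum _)).
  rewrite -(eq_filter (mem_map val_inj _)) -filter_map.
  by rewrite (sorted_filter ltn_trans) // unlock val_ord_enum iota_ltn_sorted.
have val_enum (i' : 'I_#|J|) : val (enum_val i') = nth 0%N s i'.
  have i'_lt : (i' < size (enum J))%N by rewrite -cardE.
  by rewrite /s (nth_map (enum_val i') _ _ i'_lt); congr val; apply: set_nth_default.
have s_mono := leqW_mono_in (leq_mono_in (sorted_ltn_nth ltn_trans 0%N s_sorted)).
by rewrite !val_enum s_mono // inE size_map -cardE.
Qed.

Lemma ler_sum_pairs_enum_val (R : numDomainType) (l : nat) (J : {set 'I_l})
    (G : 'I_l -> 'I_l -> R) :
  (forall i j, 0 <= G i j) ->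
  \sum_(i < #|J|) \sum_(j < #|J| | (i < j)%N) G (enum_val i) (enum_val j)
    <= \sum_(i < l) \sum_(j < l | (i < j)%N) G i j.
Proof.
move=> G0.
have -> : \sum_(i < #|J|) \sum_(j < #|J| | (i < j)%N) G (enum_val i) (enum_val j)
    = \sum_(x in J) \sum_(y in J | (x < y)%N) G x y :> R.
  rewrite [RHS]big_enum_val; apply: eq_bigr => i _.
  rewrite (big_enum_val_cond (fun y : 'I_l => (enum_val i < y)%N)).
  by apply: eq_bigl => j; rewrite ltn_enum_val.
rewrite [X in _ <= X](bigID (mem J)) /= -[X in X <= _]addr0; apply: lerD.
  by apply: ler_sum => x _; apply: ler_sum_subpred => // y /andP[].
by apply: sumr_ge0 => x _; apply: sumr_ge0.
Qed.

Lemma ler_convex_comb (R : numDomainType) (I : finType) (w u : I -> R) (B : R) :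
  (forall i, 0 <= w i) -> \sum_i w i = 1 -> (forall i, u i <= B) ->
  \sum_i w i * u i <= B.
Proof.
move=> w0 w1 uB; rewrite -[B]mul1r -w1 mulr_suml.
by apply: ler_sum => i _; rewrite ler_wpM2l.
Qed.

Lemma ler_norm_convex_sub (R : numDomainType) (I : finType) (w u : I -> R) (v eps : R) :
  (forall i, 0 <= w i) -> \sum_i w i = 1 -> (forall i, `|u i - v| <= eps) ->
  `|\sum_i w i * u i - v| <= eps.
Proof.
move=> w0 w1 uv.
have -> : \sum_i w i * u i - v = \sum_i w i * (u i - v).
  by rewrite (eq_bigr _ (fun i _ => mulrBr _ _ _)) sumrB -mulr_suml w1 mul1r.
apply: le_trans (ler_norm_sum _ _ _) _.
rewrite (eq_bigr (fun i => w i * `|u i - v|)) => [|i _]; last by rewrite normrM ger0_norm.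
exact: ler_convex_comb.
Qed.

Lemma in_qpoly1 (F : finFieldType) (h : {poly F}) : in_qpoly h 1 = 1.
Proof.
apply: val_inj; transitivity (1 : {poly F}); last exact: esym (qpolyCE h 1).
by apply: in_qpoly_small; rewrite size_poly1 size_mk_monic_gt1.
Qed.

Lemma coef_GF11 (F : finFieldType) (f : nat -> {poly F}) (N : nat) :
  coef_GF f N (1, 1) = 1.
Proof. by rewrite /coef_GF /= in_qpoly1 divr1. Qed.

Lemma admissible_enum_val (F : finFieldType) (k0 m n : nat)
    (L : 'I_m -> 'I_n -> {poly F} * {poly F}) (J : {set 'I_m}) :
  admissible k0 L -> admissible k0 (fun j : 'I_#|J| => L (enum_val j)).
Proof.
move=> [L_ok [L_nz L_nprop]]; split=> [i j|]; first exact: L_ok.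
split=> [i|i i' neq_ii']; first exact: L_nz.
by apply: L_nprop; rewrite (inj_eq enum_val_inj).
Qed.

Section LinearFormsMix.
Variables (F : finFieldType) (f : nat -> {poly F}) (R : realType) (m0 n0 k0 : nat).
Variable nu : forall N, GF f N -> R.
Arguments nu : clear implicits.
Hypothesis nu_lf : linear_forms_condition m0 n0 k0 nu.

Lemma linear_forms_condition_mix (nu' : forall N, GF f N -> R) (a c : R) :
  0 <= a -> 0 <= c -> a + c = 1 -> (forall N x, nu' N x = a * nu N x + c) ->
  linear_forms_condition m0 n0 k0 nu'.
Proof.
move=> a0 c0 ac nu'E m n mm0 nn0 L L_adm eps eps0.
have sub_lf (J : {set 'I_m}) : exists N0 : nat, forall N, (N0 <= N)%N ->
    forall b : 'I_m -> GF f N,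
    `|Ex (fun x : {ffun 'I_n -> GF f N} =>
          \prod_(i in J) nu N (lin_form L b i x)) - 1| <= eps.
  have J_m0 : (#|J| <= m0)%N by rewrite (leq_trans (max_card _)) // card_ord.
  have [N0 HN0] := nu_lf J_m0 nn0 (admissible_enum_val J L_adm) eps0.
  exists N0 => N NN0 b; rewrite (Ex_ext (h := fun x =>
    \prod_(j < #|J|) nu N (lin_form L b (enum_val j) x))) ?HN0 // => x.
  by rewrite big_enum_val.
have [N0 HN0] := fin_all_exists sub_lf.
exists (\max_J N0 J) => N NN0 b.
rewrite (Ex_ext (h := fun x => \sum_(J : {set 'I_m}) subset_weight a c J *
    \prod_(i in J) nu N (lin_form L b i x))); last first.
  by move=> x; rewrite -prod_affine_expand; apply: eq_bigr => i _; rewrite nu'E.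
rewrite Ex_sum; apply: ler_norm_convex_sub => [J||J].
- exact: subset_weight_ge0.
- exact: sum_subset_weight.
- by apply: HN0; apply: leq_trans NN0; apply: leq_bigmax.
Qed.

Lemma linear_forms_Ex_near1 : (1 <= m0)%N -> (1 <= n0)%N -> (1 <= k0)%N ->
  exists N0 : nat, forall N, (N0 <= N)%N -> `|Ex (nu N) - 1| <= 1.
Proof.
move=> m1 n1 k1.
pose L (_ _ : 'I_1) := (1 : {poly F}, 1 : {poly F}).
have L_adm : admissible k0 L.
  split=> [i j|]; first by rewrite /coef_ok /= size_poly1 k1 oner_eq0.
  split=> [i|i i']; last by rewrite (ord1 i) (ord1 i') eqxx.
  by exists ord0; rewrite /coef_frac /= rmorph1 divr1 oner_eq0.
have [N0 HN0] := nu_lf m1 n1 L_adm ltr01.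
exists N0 => N NN0; rewrite -Ex_ffun1 (Ex_ext (h := fun x =>
  \prod_(i < 1) nu N (lin_form L (fun _ => 0) i x))) ?HN0 // => x.
by rewrite big_ord1 /lin_form big_ord1 coef_GF11 mul1r addr0.
Qed.

End LinearFormsMix.

Lemma eventually_bounded_bounded (R : realDomainType) (u : nat -> R) (N0 : nat) (B : R) :
  (forall N, (N0 <= N)%N -> u N <= B) -> exists M, 0 <= M /\ forall N, u N <= M.
Proof.
move=> uB; exists (`|B| + \sum_(i < N0) `|u i|).
split=> [|N]; first by rewrite addr_ge0 ?sumr_ge0.
have sum_ge0 : 0 <= \sum_(i < N0) `|u i| by rewrite sumr_ge0.
have [NN0|NN0] := leqP N0 N.
  by have := uB N NN0; have := ler_norm B; lra.
apply: le_trans (ler_norm _) _; rewrite -[X in X <= _]add0r lerD //.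
by apply: (ler_sum_term (i0 := Ordinal NN0)).
Qed.

Lemma powR_addr_le (R : realType) (t s p : R) : 0 <= t -> 0 <= s -> 0 <= p ->
  (t + s) `^ p <= 2 `^ p * (t `^ p + s `^ p).
Proof.
wlog ts : t s / t <= s.
  move=> wlog_ts t0 s0 p0; have [ts|/ltW st] := leP t s; first exact: wlog_ts.
  by rewrite addrC [t `^ p + _]addrC; apply: wlog_ts.
move=> t0 s0 p0; apply: le_trans (_ : (2 * s) `^ p <= _).
  by apply: ge0_ler_powR; rewrite ?nnegrE //; lra.
rewrite powRM // ler_wpM2l ?powR_ge0 // lerDr.
exact: powR_ge0.
Qed.

Lemma Ex_powR_addr_le (R : realType) (T : finType) (x0 : T) (g : T -> R) (s p : R) :
  (forall x, 0 <= g x) -> 0 <= s -> 0 <= p ->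
  Ex (fun x => (g x + s) `^ p) <= 2 `^ p * (Ex (fun x => g x `^ p) + s `^ p).
Proof.
move=> g0 s0 p0; rewrite -(Ex_cst x0 (s `^ p)) -Ex_add -Ex_scale.
by apply: Ex_le => x; apply: powR_addr_le.
Qed.

Lemma ler_sum_pairs_addr (R : numDomainType) (l : nat) (G : 'I_l -> 'I_l -> R) (s : R) :
  (2 <= l)%N -> 0 <= s ->
  \sum_(i < l) \sum_(j < l | (i < j)%N) G i j + s
    <= \sum_(i < l) \sum_(j < l | (i < j)%N) (G i j + s).
Proof.
move=> l2 s0; rewrite (eq_bigr _ (fun i _ => big_split _ _ _ _ _)) big_split lerD2l /=.
have s_le_row : s <= \sum_(j < l | (0 < j)%N) s.
  exact: (ler_sum_term (i0 := Ordinal l2) (fun=> s0)).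
apply: le_trans s_le_row _.
by apply: (ler_sum_term (i0 := Ordinal (ltnW l2))) => // i; apply: sumr_ge0.
Qed.

Section CorrelationMix.
Variables (F : finFieldType) (f : nat -> {poly F}) (R : realType) (l0 : nat).
Variables (nu : forall N, GF f N -> R) (M : R).
Arguments nu : clear implicits.
Hypotheses (M_ge0 : 0 <= M) (Ex_nu_le : forall N, Ex (nu N) <= M).

Lemma Ex_prod_subset_le (tau : forall N, GF f N -> R) (N l : nat)
    (h : 'I_l -> GF f N) (J : {set 'I_l}) :
  (forall x, 0 <= tau N x) -> (l <= l0)%N ->
  (forall l', (2 <= l' <= l0)%N -> forall h' : 'I_l' -> GF f N,
     Ex (fun x => \prod_(i < l') nu N (x + h' i))
       <= \sum_(i < l') \sum_(j < l' | (i < j)%N) tau N (h' i - h' j)) ->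
  Ex (fun x => \prod_(i in J) nu N (x + h i))
    <= \sum_(i < l) \sum_(j < l | (i < j)%N) tau N (h i - h j) + (1 + M).
Proof.
move=> tau0 ll0 nu_corr.
set pairs := \sum_(i < l) _.
have pairs_ge0 : 0 <= pairs by apply: sumr_ge0 => i _; apply: sumr_ge0.
have [J2|] := leqP 2 #|J|.
  have J_l0 : (2 <= #|J| <= l0)%N.
    by rewrite J2 (leq_trans (max_card _)) // card_ord.
  rewrite (Ex_ext (h := fun x => \prod_(j < #|J|) nu N (x + h (enum_val j))));
    last by move=> x; rewrite big_enum_val.
  apply: le_trans (nu_corr _ J_l0 _) _.
  apply: (@le_trans _ _ pairs); last by rewrite lerDl addr_ge0.
  exact: ler_sum_pairs_enum_val (fun i j => tau N (h i - h j)) _.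
rewrite ltnS leq_eqVlt ltnS leqn0 => /orP[/cards1P[i0 ->]|/eqP/cards0_eq ->].
  rewrite (Ex_ext (h := fun x => nu N (x + h i0))); last by move=> x; rewrite big_set1.
  rewrite (Ex_shift (nu N)); apply: le_trans (Ex_nu_le N) _.
  by rewrite addrA addrC lerDl addr_ge0.
rewrite (Ex_ext (h := fun=> 1)) => [|x]; last by rewrite big_set0.
by rewrite (Ex_cst 0) addrCA lerDl addr_ge0.
Qed.

Lemma correlation_condition_mix (nu' : forall N, GF f N -> R) (a c : R) :
  0 <= a -> 0 <= c -> a + c = 1 -> (forall N x, nu' N x = a * nu N x + c) ->
  correlation_condition l0 nu -> correlation_condition l0 nu'.
Proof.
move=> a0 c0 ac nu'E [tau [tau0 [tau_moments nu_corr]]].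
have M1_ge0 : 0 <= 1 + M by rewrite addr_ge0.
exists (fun N x => tau N x + (1 + M)); split=> [N x|]; first by rewrite addr_ge0.
split=> [p p1|N N0 l /andP[l2 ll0] h].
  have [C HC] := tau_moments p p1.
  exists (2 `^ p * (C + (1 + M) `^ p)) => N N0.
  have p0 : 0 <= p by rewrite ltW // (lt_trans ltr01).
  apply: le_trans (Ex_powR_addr_le 0 (tau0 N) M1_ge0 p0) _.
  by rewrite ler_wpM2l ?powR_ge0 // lerD2r HC.
rewrite (Ex_ext (h := fun x => \sum_(J : {set 'I_l}) subset_weight a c J *
    \prod_(i in J) nu N (x + h i))) => [|x]; last first.
  by rewrite -prod_affine_expand; apply: eq_bigr => i _; rewrite nu'E.
rewrite Ex_sum.
apply: le_trans _ (ler_sum_pairs_addr (fun i j => tau N (h i - h j)) l2 M1_ge0).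
apply: ler_convex_comb => [J||J]; rewrite ?subset_weight_ge0 ?sum_subset_weight //.
exact: Ex_prod_subset_le (tau0 N) ll0 (nu_corr N N0).
Qed.

End CorrelationMix.

Lemma pseudorandom_mix (F : finFieldType) (f : nat -> {poly F}) (R : realType) (k : nat)
    (nu nu' : forall N, GF f N -> R) (a c : R) :
  (1 <= k)%N -> 0 <= a -> 0 <= c -> a + c = 1 ->
  (forall N x, nu' N x = a * nu N x + c) ->
  pseudorandom k nu -> pseudorandom k nu'.
Proof.
move=> k1 a0 c0 ac nu'E [nu_ge0 nu_lf nu_corr].
set K := (#|F| ^ k)%N in nu_lf nu_corr *.
have K2 : (2 <= K)%N.
  apply: leq_trans (card_finNzRing_gt1 F) _.
  by rewrite -{1}(expn1 #|F|) leq_pexp2l // ltnW // card_finNzRing_gt1.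
have m1 : (1 <= K * 2 ^ (K - 1))%N by rewrite muln_gt0 (ltnW K2) expn_gt0.
have n1 : (1 <= 3 * K - 4)%N by lia.
have [N0 Ex_nu_near1] := linear_forms_Ex_near1 nu_lf m1 n1 k1.
have [M [M_ge0 Ex_nu_le]] : exists M, 0 <= M /\ forall N, Ex (nu N) <= M.
  apply: (@eventually_bounded_bounded _ _ N0 2) => N /Ex_nu_near1.
  by have := ler_norm (Ex (nu N) - 1); lra.
split.
- by move=> N x; rewrite nu'E addr_ge0 ?mulr_ge0.
- exact: (linear_forms_condition_mix nu_lf a0 c0 ac nu'E).
- exact: (correlation_condition_mix M_ge0 Ex_nu_le a0 c0 ac nu'E nu_corr).
Qed.

Theorem mainTheorem11 (F : finFieldType) (R : realType) (k : nat)
  (f : nat -> {poly F})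
  (hk : (1 <= k)%N)
  (hf : forall N : nat, (0 < N)%N ->
          [/\ f N \is monic, irreducible_poly (f N) & size (f N) = N.+1])
  (nu : forall N : nat, GF f N -> R) :
  @pseudorandom F f R k nu ->
  @pseudorandom F f R k (fun N x => (nu N x + 1) / 2) /\
  (forall alpha : R, 0 < alpha < 1 ->
     @pseudorandom F f R k (fun N x => (1 - alpha) * nu N x + alpha)).
Proof.
move=> nu_pr; split=> [|alpha /andP[alpha0 alpha1]].
  by apply: (pseudorandom_mix (a := 1 / 2) (c := 1 / 2) hk _ _ _ _ nu_pr) => *; lra.
by apply: (pseudorandom_mix (a := 1 - alpha) (c := alpha) hk _ _ _ _ nu_pr) => *; lra.
Qed.
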